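(* Let $c,h,\alpha,\beta\in\mathbb{C}$, $l,\gamma\in\mathbb{C}^*$, and let $M$ be a nonzero $\mathcal{D}$-submodule of $L(c,h,l)\otimes A(\alpha,\beta,\gamma)$. Then (a) there exists $k\in\frac12\mathbb{Z}$ with $\bar{\mathbf{1}}\otimes v_k\in M$; and (b) there exists $k\in\frac12\mathbb{Z}$ such that $\bar{\mathbf{1}}\otimes v_i\in M$ for all $i\in\frac12\mathbb{Z}$ with $i\geq k$.
   Context: The mirror-twisted Heisenberg–Virasoro algebra $\mathcal{D}$ is the complex Lie algebra with basis $\{d_m,h_r,\mathbf{c},\mathbf{l}: m\in\mathbb{Z}, r\in\frac12+\mathbb{Z}\}$ and brackets $[d_m,d_n]=(m-n)d_{m+n}+\frac{m^3-m}{12}\delta_{m+n,0}\mathbf{c}$, $[d_m,h_r]=-rh_{m+r}$, $[h_r,h_s]=r\delta_{r+s,0}\mathbf{l}$, with $\mathbf{c},\mathbf{l}$ central. $\mathcal{D}^{+}=\mathrm{span}\{d_{n},h_{r}: n\in\mathbb{N}, r\in\frac12+\mathbb{Z}_{\ge0}\}$, $\mathcal{D}^0=\mathrm{span}\{d_0,\mathbf{c},\mathbf{l}\}$. $L(c,h,l)$ is the irreducible quotient of the Verma module $M(c,h,l)=U(\mathcal{D})\otimes_{U(\mathcal{D}^0\oplus\mathcal{D}^+)}\mathbb{C}\mathbf{1}$ ($d_0\mathbf{1}=h\mathbf{1}$, $\mathbf{c}\mathbf{1}=c\mathbf{1}$, $\mathbf{l}\mathbf{1}=l\mathbf{1}$,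 $\mathcal{D}^+\mathbf{1}=0$) by its unique maximal proper submodule, and $\bar{\mathbf{1}}$ is the image of $\mathbf{1}$. $A(\alpha,\beta,\gamma)$ is the $\mathcal{D}$-module with basis $\{v_k:k\in\frac12\mathbb{Z}\}$ and $d_mv_k=(\alpha+\beta m-k)v_{m+k}$, $h_rv_n=v_{n+r}$ for $n\in\mathbb{Z}$, $h_rv_s=\gamma v_{r+s}$ for $s\in\frac12+\mathbb{Z}$, $\mathbf{c},\mathbf{l}$ acting as $0$. Tensor products carry the action $x(v\otimes w)=xv\otimes w+v\otimes xw$. *)

From HB Require Import structures.
From mathcomp Require Import all_boot all_order all_algebra.
From mathcomp Require Import complex Rstruct.
Set Implicit Arguments. Unset Strict Implicit. Unset Printing Implicit Defensive.
Import Order.TTheory GRing.Theory Num.Theory.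
Local Open Scope ring_scope.

Definition CC : numClosedFieldType := complex Rdefinitions.R.

(* Indexing conventions.
   - d_m  (m : int)                    is  dop m.
   - h_r  (r in 1/2 + Z) with r = j + 1/2 (j : int) is  hop j.
   - c, l (central elements)           are cop, lop.
   - v_k  (k in 1/2 Z) with k = n / 2 (n : int) is indexed by n. *)

Section Dalg.
Variable F : fieldType.

Definition half_odd (j : int) : F := (2 * j + 1)%:~R / 2%:R.
Definition half_int (n : int) : F := n%:~R / 2%:R.

Variable V : lmodType F.

Definition is_lin (f : V -> V) : Prop :=
  forall (a : F) (u v : V), f (a *: u + v) = a *: f u + f v.

(* A representation of the mirror-twisted Heisenberg-Virasoro algebra D on V:
   the basis elements act by linear operators satisfying the defining brackets
   (as commutators of operators), with c and l central. *)
Definition is_Dmodule (dop hop : int -> V -> V) (cop lop : V -> V) : Prop :=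
  [/\ [/\ (forall m, is_lin (dop m)), (forall j, is_lin (hop j)), is_lin cop & is_lin lop],
      (forall (m n : int) v, dop m (dop n v) - dop n (dop m v) =
          (m - n)%:~R *: dop (m + n) v
          + (if m + n == 0 then ((m ^+ 3 - m)%:~R / 12%:R) *: cop v else 0)),
      (forall (m j : int) v, dop m (hop j v) - hop j (dop m v) =
          - half_odd j *: hop (m + j) v),
      (forall (i j : int) v, hop i (hop j v) - hop j (hop i v) =
          (if i + j + 1 == 0 then half_odd i *: lop v else 0)) &
      [/\ (forall m v, cop (dop m v) = dop m (cop v)),
          (forall j v, cop (hop j v) = hop j (cop v)),
          (forall m v, lop (dop m v) = dop m (lop v)),
          (forall j v, lop (hop j v) = hop j (lop v)) &
          (forall v, cop (lop v) = lop (cop v))]].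

Definition is_Dsubmodule (dop hop : int -> V -> V) (cop lop : V -> V)
  (S : V -> Prop) : Prop :=
  [/\ S 0, (forall (a : F) u v, S u -> S v -> S (a *: u + v)),
      (forall m v, S v -> S (dop m v)), (forall j v, S v -> S (hop j v)) &
      [/\ (forall v, S v -> S (cop v)) & (forall v, S v -> S (lop v))]].

(* V is irreducible: every nonzero submodule is all of V (and V <> 0, which is
   guaranteed below by v0 <> 0). *)
Definition Dirreducible (dop hop : int -> V -> V) (cop lop : V -> V) : Prop :=
  forall S, is_Dsubmodule dop hop cop lop S ->
    (exists v, S v /\ v <> 0) -> forall v, S v.

Definition is_hw_vector (dop hop : int -> V -> V) (cop lop : V -> V)
  (c h l : F) (v0 : V) : Prop :=
  [/\ v0 <> 0, dop 0 v0 = h *: v0, cop v0 = c *: v0, lop v0 = l *: v0 &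
      [/\ (forall n : int, 0 < n -> dop n v0 = 0) &
      (forall j : int, 0 <= j -> hop j v0 = 0)]].

(* Since A has basis
   {v_k : k in 1/2 Z}, V (x) A = (+)_k V (x) v_k, whose elements
   sum_k w_k (x) v_k are represented by finitely supported families
   f : int -> V, f n = w_{n/2}. *)
Definition finsupp (f : int -> V) : Prop :=
  exists s : seq int, forall n, n \notin s -> f n = 0.

(* Action on V (x) A via x (w (x) v) = x w (x) v + w (x) x v, where
   d_m v_k = (alpha + beta m - k) v_{m+k},
   h_r v_k = v_{k+r} (k in Z),  h_r v_k = gamma v_{k+r} (k in 1/2 + Z),
   c, l act as 0 on A. *)
Definition tens_d (alpha beta : F) (dop : int -> V -> V) (m : int) (f : int -> V)
  : int -> V :=
  fun n => dop m (f n)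
           + (alpha + beta * m%:~R - half_int (n - 2 * m)) *: f (n - 2 * m).

Definition tens_h (gamma : F) (hop : int -> V -> V) (j : int) (f : int -> V)
  : int -> V :=
  fun n => hop j (f n)
           + (if odd (absz (n - (2 * j + 1))%R) then gamma else 1)
             *: f (n - (2 * j + 1)).

Definition tens_z (z : V -> V) (f : int -> V) : int -> V := fun n => z (f n).

Definition is_tens_submodule (alpha beta gamma : F)
  (dop hop : int -> V -> V) (cop lop : V -> V) (M : (int -> V) -> Prop) : Prop :=
  [/\ [/\ (forall f, M f -> finsupp f),
      M (fun _ => 0) &
      (forall (a : F) f g, M f -> M g -> M (fun n => a *: f n + g n))],
      (forall m f, M f -> M (tens_d alpha beta dop m f)),
      (forall j f, M f -> M (tens_h gamma hop j f)) &
      [/\ (forall f, M f -> M (tens_z cop f)) &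
          (forall f, M f -> M (tens_z lop f))]].

Definition pure_tensor (w : V) (k : int) : int -> V :=
  fun n => if n == k then w else 0.

End Dalg.

From HB Require Import structures.
From mathcomp Require Import all_boot all_order all_algebra.
From mathcomp Require Import complex Rstruct.
From mathcomp Require Import zify ring.
From Stdlib Require Import FunctionalExtensionality.
Set Implicit Arguments. Unset Strict Implicit. Unset Printing Implicit Defensive.
Import Order.TTheory GRing.Theory Num.Theory.
Local Open Scope ring_scope.

(* Every vector w of L(c,h,l) is killed by all d_m and h_r with m, r large
   enough, since such vectors form a submodule containing 1bar.  For such r,
   h_r acts on w (x) v_k through A(alpha,beta,gamma) only, shifting k by r
   with a nonzero factor.  A suitable combination of h_r^2 and d_(2r) shifts
   all components of an element of M by the same amount and multiplies the
   component at v_k by k_1 - k; iterating this removes components one at a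
   time, so M contains a pure tensor w (x) v_i with w <> 0, and then, by the
   shifts, w (x) v_i for all large i.  The w with this last property form a
   submodule of L(c,h,l), which by irreducibility contains 1bar. *)

Section LinearMaps.
Variables (F : fieldType) (V : lmodType F) (f : V -> V).
Hypothesis f_lin : is_lin f.

Lemma lin0 : f 0 = 0.
Proof.
have := f_lin 1 0 0; rewrite !scale1r addr0.
by move/(congr1 (fun x => x - f 0)); rewrite subrr addrK => <-.
Qed.

Lemma linZ a u : f (a *: u) = a *: f u.
Proof. by have := f_lin a u 0; rewrite addr0 lin0 addr0. Qed.

End LinearMaps.

Lemma half_int_inj (F : fieldType) : [pchar F] =i pred0 -> injective (half_int F).
Proof.
move=> /pcharf0P F0 n p; rewrite /half_int => /(congr1 ( *%R^~ 2%:R)).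
rewrite !divfK ?F0 // => /eqP; rewrite -subr_eq0 -rmorphB /=.
have intr_eq0 z : (z%:~R == 0 :> F) = (z == 0).
  by case: z => k; rewrite ?NegzE ?rmorphN ?oppr_eq0 F0.
by rewrite intr_eq0 subr_eq0 => /eqP.
Qed.

Section VanishingAbove.
Variables (F : fieldType) (V : lmodType F).
Variables (dop hop : int -> V -> V) (cop lop : V -> V).
Hypothesis HV : is_Dmodule dop hop cop lop.

Lemma dop0 m : dop m 0 = 0.
Proof. by case: HV => [[Hd _ _ _] _ _ _ _]; exact: lin0 (Hd m). Qed.

Lemma hop0 j : hop j 0 = 0.
Proof. by case: HV => [[_ Hh _ _] _ _ _ _]; exact: lin0 (Hh j). Qed.

Lemma cop0 : cop 0 = 0.
Proof. by case: HV => [[_ _ Hc _] _ _ _ _]; exact: lin0 Hc. Qed.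

Lemma lop0 : lop 0 = 0.
Proof. by case: HV => [[_ _ _ Hl] _ _ _ _]; exact: lin0 Hl. Qed.

Lemma hopZ j a u : hop j (a *: u) = a *: hop j u.
Proof. by case: HV => [[_ Hh _ _] _ _ _ _]; exact: linZ (Hh j) a u. Qed.

Definition vanishes_above (w : V) (B : int) : Prop :=
  [/\ 0 <= B, forall m, B <= m -> dop m w = 0 & forall j, B <= j -> hop j w = 0].

Lemma vanishes_above_mono w B B' :
  vanishes_above w B -> B <= B' -> vanishes_above w B'.
Proof. by case=> B0 Dw Hw le_BB'; split=> [|m le_m|j le_m]; [|apply: Dw|apply: Hw]; lia. Qed.

Lemma vanishes_above0 B : 0 <= B -> vanishes_above 0 B.
Proof. by split=> // m _; rewrite ?dop0 ?hop0. Qed.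

Lemma vanishes_above_submodule :
  is_Dsubmodule dop hop cop lop (fun w => exists B, vanishes_above w B).
Proof.
case: HV => [[Hd Hh _ _] Hdd Hdh Hhh [Ccd Chd Cld Clh _]].
split.
- by exists 0; apply: vanishes_above0.
- move=> a u v [Bu [Bu0 Du Hu]] [Bv [Bv0 Dv Hv]]; exists (Bu + Bv); split=> [|m le_m|m le_m].
  + lia.
  + by rewrite Hd Du ?Dv ?scaler0 ?addr0 //; lia.
  + by rewrite Hh Hu ?Hv ?scaler0 ?addr0 //; lia.
- move=> n w [B [B0 Dw Hw]]; exists (B + `|n|%:Z + 1); split=> [|m le_m|j le_m].
  + lia.
  + have := Hdd m n w; rewrite (Dw m) ?(Dw (m + n)) ?dop0 ?scaler0 ?subr0 ?add0r; try lia.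
    by rewrite ifF //; apply/negbTE/eqP; lia.
  + have := Hdh n j w; rewrite (Hw j) ?(Hw (n + j)) ?dop0 ?scaler0 ?oppr0 ?sub0r; try lia.
    by move/eqP; rewrite oppr_eq0 => /eqP.
- move=> i w [B [B0 Dw Hw]]; exists (B + `|i|%:Z + 1); split=> [|m le_m|j le_m].
  + lia.
  + have := Hdh m i w; rewrite (Dw m) ?(Hw (m + i)) ?hop0 ?scaler0 ?subr0 //; lia.
  + have := Hhh j i w; rewrite (Hw j) ?hop0 ?subr0; try lia.
    by rewrite ifF //; apply/negbTE/eqP; lia.
- split=> w [B [B0 Dw Hw]]; exists B; split=> // m le_m.
  + by rewrite -Ccd Dw ?cop0.
  + by rewrite -Chd Hw ?cop0.
  + by rewrite -Cld Dw ?lop0.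
  + by rewrite -Clh Hw ?lop0.
Qed.

Lemma irreducible_vanishes_above c h l v0 :
  is_hw_vector dop hop cop lop c h l v0 -> Dirreducible dop hop cop lop ->
  forall w, exists B, vanishes_above w B.
Proof.
case=> v0_neq0 _ _ _ [Dv0 Hv0] Hirr.
apply: (Hirr _ vanishes_above_submodule).
exists v0; split=> //; exists 1.
by split=> [// | m le_m | j le_j]; [apply: Dv0 | apply: Hv0]; lia.
Qed.

Lemma finsupp_vanishes_above (f : int -> V) :
  (forall w, exists B, vanishes_above w B) -> finsupp f ->
  exists B, forall n, vanishes_above (f n) B.
Proof.
move=> Hnil [s f_s].
suff [B [B0 HB]] : exists B, 0 <= B /\ forall n, n \in s -> vanishes_above (f n) B.
  exists B => n; case: (boolP (n \in s)) => [/HB // | /f_s ->].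
  exact: vanishes_above0.
elim: s {f_s} => [|x s [Bs [Bs0 HBs]]]; first by exists 0.
have [Bx HBx] := Hnil (f x).
have Bx0 : 0 <= Bx by case: HBx.
exists (Bx + Bs); split=> [|n]; first lia.
rewrite in_cons => /orP [/eqP -> | /HBs HBn].
- by apply: vanishes_above_mono HBx _; lia.
- by apply: vanishes_above_mono HBn _; lia.
Qed.

End VanishingAbove.

Section TensorSubmodule.
Variables (F : fieldType) (V : lmodType F).
Variables (dop hop : int -> V -> V) (cop lop : V -> V).
Variables (alpha beta gamma : F) (M : (int -> V) -> Prop).
Hypothesis HV : is_Dmodule dop hop cop lop.
Hypothesis HM : is_tens_submodule alpha beta gamma dop hop cop lop M.

Lemma M_finsupp f : M f -> finsupp f.
Proof. by case: HM => [[H _ _] _ _ _]; exact: H. Qed.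

Lemma M0 : M (fun _ => 0).
Proof. by case: HM => [[]]. Qed.

Lemma Mlin a f g : M f -> M g -> M (fun n => a *: f n + g n).
Proof. by case: HM => [[_ _ H] _ _ _]; exact: H. Qed.

Lemma Mext f g : (forall n, f n = g n) -> M f -> M g.
Proof. by move=> E; have -> : f = g by apply: functional_extensionality. Qed.

Lemma MZ a f : M f -> M (fun n => a *: f n).
Proof. by move=> Mf; apply: Mext (Mlin a Mf M0) => n; exact: addr0. Qed.

Lemma Md m f : M f -> M (tens_d alpha beta dop m f).
Proof. by case: HM => _ H _ _; exact: H. Qed.

Lemma Mh j f : M f -> M (tens_h gamma hop j f).
Proof. by case: HM => _ _ H _; exact: H. Qed.

Lemma tens_d_pure_tensor m w i n : tens_d alpha beta dop m (pure_tensor w i) n =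
  pure_tensor (dop m w) i n
  + (alpha + beta * m%:~R - half_int F i) *: pure_tensor w (i + 2 * m) n.
Proof.
rewrite /tens_d /pure_tensor.
have -> : (n - 2 * m == i) = (n == i + 2 * m) by apply/eqP/eqP => ?; lia.
have [-> | _] := eqVneq n (i + 2 * m); rewrite ?addrK ?scaler0.
all: by case: ifP => _; rewrite ?(dop0 HV).
Qed.

Lemma tens_h_pure_tensor j w i n : tens_h gamma hop j (pure_tensor w i) n =
  pure_tensor (hop j w) i n
  + (if odd `|i| then gamma else 1) *: pure_tensor w (i + (2 * j + 1)) n.
Proof.
rewrite /tens_h /pure_tensor.
have -> : (n - (2 * j + 1) == i) = (n == i + (2 * j + 1)) by apply/eqP/eqP => ?; lia.
have [-> | _] := eqVneq n (i + (2 * j + 1)); rewrite ?addrK ?scaler0.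
all: by case: ifP => _; rewrite ?(hop0 HV).
Qed.

Lemma pure_tensor_shift w i j : gamma != 0 -> hop j w = 0 -> M (pure_tensor w i) ->
  M (pure_tensor w (i + (2 * j + 1))).
Proof.
move=> gamma_neq0 hw0 Mw; set a := if odd `|i| then gamma else 1.
have a_neq0 : a != 0 by rewrite /a; case: ifP => _; rewrite ?oner_neq0.
apply: Mext (MZ a^-1 (Mh j Mw)) => n.
by rewrite tens_h_pure_tensor hw0 {1}/pure_tensor if_same add0r scalerA mulVf ?scale1r.
Qed.

Definition eventually_pure_in (w : V) : Prop :=
  exists k, forall i, k <= i -> M (pure_tensor w i).

Lemma eventually_pure_submodule : is_Dsubmodule dop hop cop lop eventually_pure_in.
Proof.
have pure0 i : M (pure_tensor 0 i).
  by apply: Mext M0 => n; rewrite /pure_tensor; case: ifP.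
have pure_z (z : V -> V) : z 0 = 0 -> (forall f, M f -> M (tens_z z f)) ->
    forall w, eventually_pure_in w -> eventually_pure_in (z w).
  move=> z0 Mz w [k Hk]; exists k => i le_i; apply: Mext (Mz _ (Hk i le_i)) => n.
  by rewrite /tens_z /pure_tensor; case: ifP.
case: HM => _ _ _ [Mc Ml]; split.
- by exists 0.
- move=> a u v [ku Hu] [kv Hv]; exists (Num.max ku kv) => i le_i.
  apply: Mext (Mlin a (Hu i _) (Hv i _)); try lia.
  by move=> n; rewrite /pure_tensor; case: ifP; rewrite ?scaler0 ?addr0.
- move=> m w [k Hk]; exists (Num.max k (k - 2 * m)) => i le_i.
  apply: Mext (Mlin (- (alpha + beta * m%:~R - half_int F i))
    (Hk (i + 2 * m) _) (Md m (Hk i _))); try lia.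
  by move=> n; rewrite tens_d_pure_tensor scaleNr addrC addrK.
- move=> j w [k Hk]; exists (Num.max k (k - (2 * j + 1))) => i le_i.
  apply: Mext (Mlin (- (if odd `|i| then gamma else 1))
    (Hk (i + (2 * j + 1)) _) (Mh j (Hk i _))); try lia.
  by move=> n; rewrite tens_h_pure_tensor scaleNr addrC addrK.
- by split; apply: pure_z; rewrite ?(cop0 HV) ?(lop0 HV).
Qed.

(* Every index beyond i + 4B + 1 is reached from i by one odd shift, or by two,
   each of length at least 2B + 1. *)
Lemma eventually_pure_of_vanishing w i B : gamma != 0 ->
  vanishes_above dop hop w B -> M (pure_tensor w i) -> eventually_pure_in w.
Proof.
move=> gamma_neq0 [B0 _ Hw] Mw; exists (i + 4 * B + 2) => i' le_i'.
set d := i' - i - (4 * B + 2).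
have [d_even|d_odd] : d = 2 * (d %/ 2)%Z \/ d = 2 * (d %/ 2)%Z + 1 by lia.
- have -> : i' = i + (2 * B + 1) + (2 * (B + (d %/ 2)%Z) + 1) by lia.
  apply: (pure_tensor_shift gamma_neq0) (pure_tensor_shift gamma_neq0 _ Mw);
    by apply: Hw; lia.
- have -> : i' = i + (2 * (2 * B + 1 + (d %/ 2)%Z) + 1) by lia.
  by apply: (pure_tensor_shift gamma_neq0) Mw; apply: Hw; lia.
Qed.

(* Applying h_j twice multiplies every component by gamma (the parity of the
   index alternates), while d_(2j+1) multiplies the component at v_k by
   alpha + beta (2j+1) - k; both shift by the same amount. *)
Lemma M_shift_cancel f j n1 : gamma != 0 -> M f ->
  (forall n, hop j (f n) = 0) -> (forall n, dop (2 * j + 1) (f n) = 0) ->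
  exists g, M g /\ forall n,
    g n = (half_int F n1 - half_int F (n - 2 * (2 * j + 1))) *: f (n - 2 * (2 * j + 1)).
Proof.
move=> gamma_neq0 Mf hf0 df0.
set N := 2 * (2 * j + 1); set A := alpha + beta * (2 * j + 1)%:~R.
have Ehh n : tens_h gamma hop j (tens_h gamma hop j f) n = gamma *: f (n - N).
  rewrite /tens_h !hf0 !add0r (hopZ HV) hf0 scaler0 add0r scalerA.
  have -> : n - (2 * j + 1) - (2 * j + 1) = n - N by rewrite /N; lia.
  have -> : odd `|(n - N)%R| = ~~ odd `|(n - (2 * j + 1))%R| by rewrite /N; lia.
  by case: (odd _); rewrite ?mulr1 ?mul1r.
have Ed n : tens_d alpha beta dop (2 * j + 1) f n = (A - half_int F (n - N)) *: f (n - N).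
  by rewrite /tens_d df0 add0r.
exists (fun n => - ((A - half_int F n1) / gamma)
                   *: tens_h gamma hop j (tens_h gamma hop j f) n
                 + tens_d alpha beta dop (2 * j + 1) f n).
split; first by apply: Mlin; [apply: Mh; apply: Mh | apply: Md].
move=> n; rewrite Ehh Ed scalerA mulNr divfK // -scalerDl; congr (_ *: _); ring.
Qed.

Lemma M_has_pure_tensor f : gamma != 0 -> [pchar F] =i pred0 ->
  (forall w, exists B, vanishes_above dop hop w B) -> M f -> (exists n, f n != 0) ->
  exists w i, w != 0 /\ M (pure_tensor w i).
Proof.
move=> gamma_neq0 F0 Hnil Mf; have [s f_s] := M_finsupp Mf.
have [N] := ubnP (size s); elim: N s f Mf f_s => // N IH s f Mf f_s /ltnSE le_s [n1 fn1].
have n1_s : n1 \in s by apply: contraT => /f_s fn1_0; rewrite fn1_0 eqxx in fn1.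
have [/hasP [p _ /andP [p_n1 fp]] | /hasPn f_pure] :=
  boolP (has (fun p => (p != n1) && (f p != 0)) s); last first.
  exists (f n1), n1; split=> //; apply: Mext Mf => n.
  rewrite /pure_tensor; case: eqVneq => [-> // | n_n1].
  case: (boolP (n \in s)) => [/f_pure | /f_s //].
  by rewrite n_n1 /= => /negPn/eqP.
have [B fB] := finsupp_vanishes_above HV Hnil (ex_intro _ s f_s).
have [hf0 df0] : (forall n, hop B (f n) = 0) /\ (forall n, dop (2 * B + 1) (f n) = 0).
  by split=> n; case: (fB n) => B0 Dw Hw; [apply: Hw | apply: Dw]; lia.
have [g [Mg Eg]] := M_shift_cancel n1 gamma_neq0 Mf hf0 df0.
apply: (IH [seq q + 2 * (2 * B + 1) | q <- s & q != n1] g Mg).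
- move=> n n_s'; rewrite Eg.
  have [-> | n_n1] := eqVneq (n - 2 * (2 * B + 1)) n1; first by rewrite subrr scale0r.
  rewrite f_s ?scaler0 //; apply: contra n_s' => n_s.
  by apply/mapP; exists (n - 2 * (2 * B + 1)); rewrite ?mem_filter ?n_n1 //; lia.
- rewrite size_map size_filter (leq_trans _ le_s) //.
  by rewrite -(count_predC (pred1 n1)) -add1n leq_add2r -has_count has_pred1.
- exists (p + 2 * (2 * B + 1)); rewrite Eg addrK scaler_eq0 negb_or fp andbT.
  by rewrite subr_eq0; apply: contra p_n1 => /eqP/(half_int_inj F0) ->.
Qed.

End TensorSubmodule.

Unset Implicit Arguments.
Set Strict Implicit.

Theorem lemma3p5 (c h alpha beta l gamma : CC)
  (Hl : l != 0) (Hgamma : gamma != 0)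
  (V : lmodType CC) (dop hop : int -> V -> V) (cop lop : V -> V)
  (HV : is_Dmodule dop hop cop lop)
  (v0 : V) (Hv0 : is_hw_vector dop hop cop lop c h l v0)
  (Hirr : Dirreducible dop hop cop lop)
  (M : (int -> V) -> Prop)
  (HM : is_tens_submodule alpha beta gamma dop hop cop lop M)
  (HMnz : exists f n, M f /\ f n <> 0) :
  (exists k : int, M (pure_tensor v0 k)) /\
  (exists k : int, forall i : int, k <= i -> M (pure_tensor v0 i)).
Proof.
have Hnil := irreducible_vanishes_above HV Hv0 Hirr.
have [f [n [Mf fn]]] := HMnz.
have [w [i [w_neq0 Mw]]] :=
  M_has_pure_tensor HV HM Hgamma (@pchar_num CC) Hnil Mf (ex_intro _ n (introN eqP fn)).
have [B wB] := Hnil w.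
have [k Hk] : eventually_pure_in M v0.
  apply: (Hirr _ (eventually_pure_submodule HV HM)).
  exists w; split; last exact/eqP.
  exact (eventually_pure_of_vanishing HV HM Hgamma wB Mw).
by split; exists k => //; apply: Hk.
Qed.
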